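(* For all positive integers $n,q,d_h,d_m$ with $q\ge2$ and $d_m\le n$, $$A_{MU}(n,q,d_h,d_m)\le\frac{M(n,q,d)}{\lfloor n/d_m\rfloor},\qquad d=\min\{d_h,2d_m\}.$$
   Context: $\Sigma_q=\{0,\dots,q-1\}$, $d_H$ is Hamming distance, and for $\vec a\in\Sigma_q^n$, $\vec a_i^j=(a_i,\dots,a_j)$. A code $\mathcal C\subseteq\Sigma_q^n$ is a $(d_h,d_m)$-MU code if (1) any two distinct codewords are at Hamming distance at least $d_h$, and (2) for every two not necessarily distinct $\vec a,\vec b\in\mathcal C$ and every $i\in[1,n-1]$, $d_H(\vec a_1^i,\vec b_{n-i+1}^n)\ge\min\{i,d_m\}$. $A_{MU}(n,q,d_h,d_m)$ is the largest size of a $(d_h,d_m)$-MU code in $\Sigma_q^n$, and $M(n,q,d)$ is the largest size of a code in $\Sigma_q^n$ with minimum Hamming distance $d$. *)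

From HB Require Import structures.
From mathcomp Require Import all_boot all_order all_algebra.
Set Implicit Arguments. Unset Strict Implicit. Unset Printing Implicit Defensive.

Definition word (n q : nat) := (n.-tuple 'I_q)%type.

(* Hamming distance between two sequences (used only on equal lengths). *)
Definition dH (T : eqType) (s t : seq T) : nat :=
  count (fun p : T * T => p.1 != p.2) (zip s t).

Definition is_dist_code (n q d : nat) (C : {set word n q}) : bool :=
  [forall a in C, forall b in C, (a != b) ==> (d <= dH a b)].

(* (d_h, d_m)-MU code: condition (2) for i in [1, n-1], with a_1^i = take i a
   and b_{n-i+1}^n = drop (n - i) b. *)
Definition is_MU_code (n q dh dm : nat) (C : {set word n q}) : bool :=
  is_dist_code dh C &&
  [forall a in C, forall b in C, forall i : 'I_n,
     (0 < i) ==> (minn i dm <= dH (take i a) (drop (n - i) b))].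

Definition A_MU (n q dh dm : nat) : nat :=
  \max_(C : {set word n q} | is_MU_code dh dm C) #|C|.

Definition M_code (n q d : nat) : nat :=
  \max_(C : {set word n q} | is_dist_code d C) #|C|.

(* Cut each codeword of an MU code into k = n / d_m blocks of length d_m and take its
   k cyclic shifts by multiples of d_m.  Two shifts of distinct codewords by the same
   amount are at distance d_h; two shifts by different multiples of d_m split into two
   overlaps of one codeword's prefix with the other's suffix, each of length >= d_m,
   so the mutual-uncorrelation condition puts them at distance >= 2 d_m.  Hence the
   k |C| shifts are distinct and form a code of minimum distance min(d_h, 2 d_m). *)

From HB Require Import structures.
From mathcomp Require Import all_boot all_order all_algebra zify.
Import Order.TTheory GRing.Theory Num.Theory.
Set Implicit Arguments. Unset Strict Implicit.

Section HammingDistance.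

Variable T : eqType.
Implicit Types x y : seq T.

Lemma dH_cat x1 x2 y1 y2 : size x1 = size y1 ->
  dH (x1 ++ x2) (y1 ++ y2) = dH x1 y1 + dH x2 y2.
Proof. by move=> h; rewrite /dH zip_cat // count_cat. Qed.

Lemma dHC x y : dH x y = dH y x.
Proof.
elim: x y => [|a x IH] [|b y] //=; rewrite /dH /= in IH *.
by rewrite IH eq_sym.
Qed.

Lemma dHxx x : dH x x = 0.
Proof. by elim: x => //= a x; rewrite /dH /= eqxx. Qed.

Lemma dH_rot k x y : size x = size y -> dH (rot k x) (rot k y) = dH x y.
Proof.
move=> h; rewrite /rot dH_cat ?size_drop ?h // addnC -dH_cat ?size_take ?h //.
by rewrite !cat_take_drop.
Qed.

Lemma dH_rot_lt n s t x y : size x = n -> size y = n -> s < t -> t <= n ->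
  dH (rot s x) (rot t y) =
  dH (take (n - (t - s)) x) (drop (t - s) y) + dH (take (t - s) y) (drop (n - (t - s)) x).
Proof.
move=> sx sy st tn; move Hu: (t - s) => u.
have tE : t = s + u by lia.
have Ex : drop s x = take (n - t) (drop s x) ++ drop (n - t) (drop s x).
  by rewrite cat_take_drop.
have Ey : take t y = take u y ++ take s (drop u y) by rewrite tE addnC takeD.
rewrite /rot Ex Ey -catA.
rewrite dH_cat; last by rewrite !size_take !size_drop sx sy; case: ltnP; lia.
rewrite dH_cat; last by rewrite size_drop size_take !size_drop sx sy; case: ltnP; lia.
rewrite drop_drop (_ : n - t + s = n - u); last by lia.
rewrite [dH _ (take u y)]dHC.
have Ex' : take (n - u) x = take s x ++ take (n - t) (drop s x).
  by rewrite -takeD; congr take; lia.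
have Ey' : drop u y = take s (drop u y) ++ drop t y.
  by rewrite -{1}(cat_take_drop s (drop u y)) drop_drop tE addnC.
rewrite Ex' [in RHS]Ey' dH_cat; last first.
  by rewrite !size_take size_drop sx sy; case: ltnP => ?; case: ltnP => ?; lia.
by rewrite addnA; lia.
Qed.

End HammingDistance.

Section MUCode.

Variables n q dh dm : nat.
Variable C : {set word n q}.
Hypothesis MU_C : is_MU_code dh dm C.

Lemma MU_code_dist a b : a \in C -> b \in C -> a != b -> dh <= dH a b.
Proof.
move=> aC bC; case/andP: MU_C => /forall_inP /(_ a aC) /forall_inP /(_ b bC) /implyP.
by move=> + _; apply.
Qed.

Lemma MU_code_overlap a b i : a \in C -> b \in C -> 0 < i -> i < n ->
  minn i dm <= dH (take i a) (drop (n - i) b).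
Proof.
case/andP: MU_C => _ /forall_inP H aC bC i0 iln.
move/forall_inP: (H a aC) => /(_ b bC) /forallP /(_ (Ordinal iln)) /implyP.
exact.
Qed.

Hypothesis dm_gt0 : 0 < dm.

Lemma MU_code_rot_far a b s t : a \in C -> b \in C -> s + dm <= t -> t + dm <= n ->
  2 * dm <= dH (rot s a) (rot t b).
Proof.
move=> aC bC st tn.
rewrite (@dH_rot_lt _ n) ?size_tuple //; [|lia|lia].
have h1 := @MU_code_overlap a b (n - (t - s)) aC bC.
have h2 := @MU_code_overlap b a (t - s) bC aC.
rewrite (_ : n - (n - (t - s)) = t - s) in h1; last by lia.
rewrite (minn_idPr _) in h1; last by lia.
rewrite (minn_idPr _) in h2; last by lia.
by rewrite mul2n -addnn leq_add ?h1 ?h2 //; lia.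
Qed.

Let k := n %/ dm.

Definition MU_shift (p : word n q * 'I_k) : word n q := rot_tuple (p.2 * dm) p.1.

Lemma MU_shift_dist x y : x \in setX C [set: 'I_k] -> y \in setX C [set: 'I_k] ->
  x != y -> minn dh (2 * dm) <= dH (MU_shift x) (MU_shift y).
Proof.
case: x y => [a i] [b j]; rewrite !inE /= !andbT => aC bC ne.
have blockP (l : 'I_k) : l * dm + dm <= n.
  by rewrite -mulSnr (leq_trans _ (leq_divM n dm)) // leq_pmul2r.
have ltM (l l' : 'I_k) : l < l' -> l * dm + dm <= l' * dm by rewrite -mulSnr leq_pmul2r.
rewrite /MU_shift /=; case: (ltngtP i j) => [ij|ji|/val_inj ij].
- exact/(leq_trans (geq_minr _ _))/MU_code_rot_far/blockP/ltM.
- by rewrite dHC; exact/(leq_trans (geq_minr _ _))/MU_code_rot_far/blockP/ltM.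
- subst j; rewrite dH_rot ?size_tuple //.
  apply/(leq_trans (geq_minl _ _))/MU_code_dist => //.
  by apply: contraNneq ne => ->.
Qed.

Hypothesis dh_gt0 : 0 < dh.

Lemma MU_shift_inj : {in setX C [set: 'I_k] &, injective MU_shift}.
Proof.
move=> x y xC yC fxy; apply/eqP/negPn/negP => ne.
have := MU_shift_dist xC yC ne; rewrite fxy dHxx.
by rewrite leqNgt leq_min dh_gt0 muln_gt0 dm_gt0.
Qed.

Lemma MU_code_card_mul_le_M_code : #|C| * k <= M_code n q (minn dh (2 * dm)).
Proof.
rewrite -[k]card_ord -cardsT -cardsX -(card_in_imset MU_shift_inj).
apply: (@leq_bigmax_cond _ (is_dist_code (minn dh (2 * dm)))
                          (fun D : {set word n q} => #|D|)).
apply/forall_inP => _ /imsetP [x xC ->]; apply/forall_inP => _ /imsetP [y yC ->].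
by apply/implyP => ne; apply: MU_shift_dist => //; apply: contra ne => /eqP ->.
Qed.

End MUCode.

Theorem theorem3 (n q dh dm : nat) :
  0 < n -> 0 < q -> 0 < dh -> 0 < dm -> 2 <= q -> dm <= n ->
  ((A_MU n q dh dm)%:R <=
     (M_code n q (minn dh (2 * dm)))%:R / (n %/ dm)%:R :> rat)%R.
Proof.
move=> _ _ dh0 dm0 _ dmn.
have k0 : 0 < n %/ dm by rewrite divn_gt0.
rewrite ler_pdivlMr ?ltr0n // -natrM ler_nat.
rewrite -leq_divRL //; apply/bigmax_leqP => C MU_C.
by rewrite leq_divRL //; apply: MU_code_card_mul_le_M_code.
Qed.
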